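(* Let $G$ be a hyperbolic group and let $H$ be a $G$-limit group. Let $\alpha:F_1\to F_2$ be an isomorphism between finite subgroups $F_1,F_2$ of $H$. Then there exists an isomorphism $\beta:F'_1\to F'_2$ between finite subgroups $F'_1,F'_2$ of $G$ such that the HNN extension $H\ast_\alpha$ is a $(G\ast_\beta)$-limit group.
   Context: For groups $\Gamma$ and $H$, $H$ is fully residually $\Gamma$ if for every finite subset $S\subset H$ there is a homomorphism $H\to\Gamma$ injective on $S$; a $\Gamma$-limit group is a finitely generated fully residually $\Gamma$ group. For an isomorphism $\alpha:F_1\to F_2$ between subgroups of a group $H$, $H\ast_\alpha=\langle H,t\mid txt^{-1}=\alpha(x)\ \forall x\in F_1\rangle$ is the HNN extension. *)

From Stdlib Require Import List Arith.
Import ListNotations.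

(** Groups (left axioms suffice). *)
Record Group := {
  gcar :> Type;
  gmul : gcar -> gcar -> gcar;
  gone : gcar;
  ginv : gcar -> gcar;
  gmulA : forall x y z, gmul x (gmul y z) = gmul (gmul x y) z;
  gmul1 : forall x, gmul gone x = x;
  gmulV : forall x, gmul (ginv x) x = gone
}.

Arguments gmul {g} _ _.
Arguments gone {g}.
Arguments ginv {g} _.

Definition is_hom (A B : Group) (f : A -> B) : Prop :=
  forall x y : A, f (gmul x y) = gmul (f x) (f y).

Definition is_subgroup (A : Group) (P : A -> Prop) : Prop :=
  P gone /\ (forall x y, P x -> P y -> P (gmul x y)) /\ (forall x, P x -> P (ginv x)).

Definition finite_subgroup (A : Group) (P : A -> Prop) : Prop :=
  is_subgroup A P /\ exists l : list A, forall x, P x -> In x l.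

(** [a] restricts to an isomorphism of groups from the subgroup [F1] onto [F2]
    (only the restriction of the total function [a] to [F1] matters). *)
Definition sub_iso (A : Group) (F1 F2 : A -> Prop) (a : A -> A) : Prop :=
  (forall x, F1 x -> F2 (a x)) /\
  (forall x y, F1 x -> F1 y -> a (gmul x y) = gmul (a x) (a y)) /\
  (forall x y, F1 x -> F1 y -> a x = a y -> x = y) /\
  (forall z, F2 z -> exists x, F1 x /\ a x = z).

Fixpoint eval_word (A : Group) (w : list (bool * A)) : A :=
  match w with
  | [] => gone
  | (b, s) :: w' => gmul (if b then s else ginv s) (eval_word A w')
  end.

Definition word_over (A : Group) (S : list A) (w : list (bool * A)) : Prop :=
  forall p, In p w -> In (snd p) S.

Definition generates (A : Group) (S : list A) : Prop :=
  forall g : A, exists w, word_over A S w /\ eval_word A w = g.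

Definition finitely_generated (A : Group) : Prop :=
  exists S : list A, generates A S.

Definition word_len_le (A : Group) (S : list A) (g : A) (n : nat) : Prop :=
  exists w, word_over A S w /\ length w <= n /\ eval_word A w = g.

Definition word_dist (A : Group) (S : list A) (x y : A) (n : nat) : Prop :=
  word_len_le A S (gmul (ginv x) y) n /\
  forall m, word_len_le A S (gmul (ginv x) y) m -> n <= m.

(** Gromov hyperbolic group: finitely generated, and for some finite generating
    set the word metric is delta-hyperbolic (Gromov four-point condition,
    equivalently (x|y)_w >= min((x|z)_w,(y|z)_w) - delta). *)
Definition hyperbolic_group (A : Group) : Prop :=
  exists (S : list A), generates A S /\
  exists delta : nat,
    forall (x y z w : A) (dxy dzw dxz dyw dxw dyz : nat),
      word_dist A S x y dxy -> word_dist A S z w dzw ->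
      word_dist A S x z dxz -> word_dist A S y w dyw ->
      word_dist A S x w dxw -> word_dist A S y z dyz ->
      dxy + dzw <= Nat.max (dxz + dyw) (dxw + dyz) + 2 * delta.

Definition fully_residually (Gam H : Group) : Prop :=
  forall S : list H, exists f : H -> Gam, is_hom H Gam f /\
    forall x y, In x S -> In y S -> f x = f y -> x = y.

Definition limit_group (Gam H : Group) : Prop :=
  finitely_generated H /\ fully_residually Gam H.

(** (K, i, t) is the HNN extension H *_a = < H, t | t x t^-1 = a(x), x in F1 >,
    characterised by the universal property of this presentation. *)
Definition is_HNN (H : Group) (F1 : H -> Prop) (a : H -> H)
    (K : Group) (i : H -> K) (t : K) : Prop :=
  is_hom H K i /\
  (forall x, F1 x -> gmul t (gmul (i x) (ginv t)) = i (a x)) /\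
  forall (L : Group) (j : H -> L) (s : L),
    is_hom H L j ->
    (forall x, F1 x -> gmul s (gmul (j x) (ginv s)) = j (a x)) ->
    exists phi : K -> L,
      is_hom K L phi /\ (forall x, phi (i x) = j x) /\ phi t = s /\
      forall psi : K -> L,
        is_hom K L psi -> (forall x, psi (i x) = j x) -> psi t = s ->
        forall k, psi k = phi k.

(* Fix a finite generating set of G whose word metric is delta-hyperbolic.  For a
   homomorphism f : H -> G injective on F1 and F2, the finite subgroups f F1 and f F2 have
   conjugates (f F1)^q1 and (f F2)^q2 in the ball of radius 4 delta + 1 (conjugate by a
   quasi-centre), and alpha induces an isomorphism between them.  Only finitely many such
   configurations exist, so one of them, which yields F1', F2' and beta, is realized by
   homomorphisms f injective on arbitrarily large finite subsets of H.  For such an f, sending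
   h to f(h)^q1 and t to q1^-1 q2 t' defines a homomorphism H *_alpha -> G *_beta; it maps the
   reduced forms of finitely many given elements to reduced words, which stay nontrivial by
   Britton's lemma.  Britton's lemma is proved through the action on normal forms. *)

From Stdlib Require Import List Arith Lia Wf_nat Classical ClassicalEpsilon
  ProofIrrelevance FunctionalExtensionality PropExtensionality.
Import ListNotations.

Section GroupFacts.
Variable A : Group.
Implicit Types x y z : A.

Lemma gmul_inv_r x : gmul x (ginv x) = gone.
Proof.
  rewrite <- (gmul1 A (gmul x (ginv x))), <- (gmulV A (ginv x)) at 1.
  rewrite <- gmulA, (gmulA A (ginv x) x), gmulV, gmul1.
  apply gmulV.
Qed.

Lemma gmul_one_r x : gmul x gone = x.
Proof. rewrite <- (gmulV A x), gmulA, gmul_inv_r, gmul1; reflexivity. Qed.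

Lemma gmulA_r x y z : gmul (gmul x y) z = gmul x (gmul y z).
Proof. symmetry; apply gmulA. Qed.

Lemma gmulK_l x y : gmul (ginv x) (gmul x y) = y.
Proof. rewrite gmulA, gmulV, gmul1; reflexivity. Qed.

Lemma gmulKV_l x y : gmul x (gmul (ginv x) y) = y.
Proof. rewrite gmulA, gmul_inv_r, gmul1; reflexivity. Qed.

Lemma gmul_cancel_l x y z : gmul x y = gmul x z -> y = z.
Proof. intro E. rewrite <- (gmulK_l x y), <- (gmulK_l x z), E; reflexivity. Qed.

Lemma gmul_cancel_r x y z : gmul y x = gmul z x -> y = z.
Proof.
  intro E. rewrite <- (gmul_one_r y), <- (gmul_one_r z), <- (gmul_inv_r x), !gmulA, E.
  reflexivity.
Qed.

Lemma ginv_unique x y : gmul x y = gone -> ginv x = y.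
Proof. intro E. rewrite <- (gmul_one_r (ginv x)), <- E, gmulK_l; reflexivity. Qed.

Lemma ginvK x : ginv (ginv x) = x.
Proof. apply ginv_unique, gmulV. Qed.

Lemma ginv_one : ginv (@gone A) = gone.
Proof. apply ginv_unique, gmul1. Qed.

Lemma ginv_mul x y : ginv (gmul x y) = gmul (ginv y) (ginv x).
Proof. apply ginv_unique. rewrite gmulA_r, gmulKV_l, gmul_inv_r; reflexivity. Qed.

Lemma eq_of_ldiv_one x y : gmul (ginv x) y = gone -> x = y.
Proof. intro E. rewrite <- (gmulKV_l x y), E, gmul_one_r; reflexivity. Qed.

End GroupFacts.

Ltac gnorm := repeat progress rewrite ?gmulA_r, ?gmul1, ?gmul_one_r, ?gmulV, ?gmul_inv_r,
  ?gmulK_l, ?gmulKV_l, ?ginv_mul, ?ginvK, ?ginv_one.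

Section HomFacts.
Variables A B : Group.
Variable f : A -> B.
Hypothesis hf : is_hom A B f.

Lemma hom_one : f gone = gone.
Proof. apply (gmul_cancel_l B (f gone)). rewrite <- hf, gmul1, gmul_one_r; reflexivity. Qed.

Lemma hom_inv x : f (ginv x) = ginv (f x).
Proof. symmetry; apply ginv_unique. rewrite <- hf, gmul_inv_r. apply hom_one. Qed.

Lemma eval_word_hom w :
  f (eval_word A w) = eval_word B (map (fun p => (fst p, f (snd p))) w).
Proof.
  induction w as [|[b s] w IH]; simpl; [apply hom_one|].
  rewrite hf, IH. destruct b; [|rewrite hom_inv]; reflexivity.
Qed.

End HomFacts.

Lemma hom_comp (A B C : Group) (f : A -> B) (g : B -> C) :
  is_hom A B f -> is_hom B C g -> is_hom A C (fun x => g (f x)).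
Proof. intros hf hg x y. rewrite hf, hg. reflexivity. Qed.

Definition conjg (A : Group) (z q : A) : A := gmul (ginv q) (gmul z q).

Lemma conjg_hom (A : Group) (q : A) : is_hom A A (fun z => conjg A z q).
Proof. intros x y. unfold conjg. gnorm. reflexivity. Qed.

Lemma conjg_inj (A : Group) (q x y : A) : conjg A x q = conjg A y q -> x = y.
Proof. unfold conjg. intro E. apply gmul_cancel_l, gmul_cancel_r in E. exact E. Qed.

Section Subgroups.
Variable A : Group.
Variable P : A -> Prop.
Hypothesis sgP : is_subgroup A P.

Lemma subgroup_one : P gone.
Proof. apply sgP. Qed.

Lemma subgroup_mul x y : P x -> P y -> P (gmul x y).
Proof. apply sgP. Qed.

Lemma subgroup_inv x : P x -> P (ginv x).
Proof. apply sgP. Qed.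

Definition subgroup_group : Group.
  refine {| gcar := {x : A | P x};
            gmul := fun a b => exist _ (gmul (proj1_sig a) (proj1_sig b))
                                 (subgroup_mul _ _ (proj2_sig a) (proj2_sig b));
            gone := exist _ gone subgroup_one;
            ginv := fun a => exist _ (ginv (proj1_sig a)) (subgroup_inv _ (proj2_sig a)) |};
  intros; apply eq_sig_hprop; try (intros; apply proof_irrelevance); simpl.
  - apply gmulA.
  - apply gmul1.
  - apply gmulV.
Defined.

End Subgroups.

Lemma finite_subgroup_eqv (A : Group) (P Q : A -> Prop) :
  (forall x, P x <-> Q x) -> finite_subgroup A P -> finite_subgroup A Q.
Proof.
  intros E [[h1 [h2 h3]] [l Hl]]. split; [split; [|split]|exists l]; intros.
  - apply E, h1.
  - apply E, h2; apply E; assumption.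
  - apply E, h3, E; assumption.
  - apply Hl, E; assumption.
Qed.

Definition image (A B : Group) (f : A -> B) (P : A -> Prop) (z : B) : Prop :=
  exists y, P y /\ z = f y.

Lemma finite_subgroup_image (A B : Group) (f : A -> B) (P : A -> Prop) :
  is_hom A B f -> finite_subgroup A P -> finite_subgroup B (image A B f P).
Proof.
  intros hf [[h1 [h2 h3]] [l Hl]]. split; [split; [|split]|].
  - exists gone. split; [exact h1|]. symmetry; apply (hom_one _ _ _ hf).
  - intros x y [a [Pa ->]] [b [Pb ->]]. exists (gmul a b). split; auto.
  - intros x [a [Pa ->]]. exists (ginv a). split; auto. symmetry; apply (hom_inv _ _ _ hf).
  - exists (map f l). intros z [y [Py ->]]. apply in_map; auto.
Qed.

Lemma exact_list {X : Type} (P : X -> Prop) (l : list X) :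
  (forall x, P x -> In x l) -> exists l', forall x, In x l' <-> P x.
Proof.
  intro Hl. exists (filter (fun x => if excluded_middle_informative (P x) then true else false) l).
  intro x. rewrite filter_In.
  destruct (excluded_middle_informative (P x)) as [Px|Px].
  - split; auto.
  - split; [intros [_ F]; discriminate F | tauto].
Qed.

Record Perm (X : Type) := mkPerm {
  pfun : X -> X; pinv : X -> X;
  pfunK : forall x, pfun (pinv x) = x; pinvK : forall x, pinv (pfun x) = x }.
Arguments pfun {X} _ _.
Arguments pinv {X} _ _.

Lemma perm_ext (X : Type) (p q : Perm X) : (forall x, pfun p x = pfun q x) -> p = q.
Proof.
  destruct p as [f1 g1 fg1 gf1], q as [f2 g2 fg2 gf2]; simpl; intro E.
  assert (f1 = f2) as <- by (apply functional_extensionality; auto).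
  assert (g1 = g2) as <-.
  { apply functional_extensionality; intro x. rewrite <- (gf1 (g2 x)), fg2. reflexivity. }
  f_equal; apply proof_irrelevance.
Qed.

Section SymGroup.
Variable X : Type.

Definition perm_mul (p q : Perm X) : Perm X.
  refine (mkPerm X (fun x => pfun p (pfun q x)) (fun x => pinv q (pinv p x)) _ _);
  intro x; rewrite ?pfunK, ?pinvK; reflexivity.
Defined.

Definition perm_one : Perm X :=
  mkPerm X (fun x => x) (fun x => x) (fun _ => eq_refl) (fun _ => eq_refl).

Definition perm_inv (p : Perm X) : Perm X := mkPerm X (pinv p) (pfun p) (pinvK X p) (pfunK X p).

Definition sym_group : Group.
  refine {| gcar := Perm X; gmul := perm_mul; gone := perm_one; ginv := perm_inv |};
  intros; apply perm_ext; intros; simpl; rewrite ?pinvK; reflexivity.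
Defined.

End SymGroup.

Section Words.
Variable K : Group.

Lemma eval_word_app (w1 w2 : list (bool * K)) :
  eval_word K (w1 ++ w2) = gmul (eval_word K w1) (eval_word K w2).
Proof.
  induction w1 as [|[b s] w IH]; simpl; [rewrite gmul1; reflexivity|].
  rewrite IH, gmulA. reflexivity.
Qed.

Definition word_inv (w : list (bool * K)) : list (bool * K) :=
  rev (map (fun p => (negb (fst p), snd p)) w).

Lemma eval_word_inv w : eval_word K (word_inv w) = ginv (eval_word K w).
Proof.
  unfold word_inv. induction w as [|[b s] w IH]; simpl; [rewrite ginv_one; reflexivity|].
  rewrite eval_word_app, IH. simpl. rewrite gmul_one_r, ginv_mul.
  destruct b; simpl; rewrite ?ginvK; reflexivity.
Qed.

Variable S : list K.

Lemma word_over_app w1 w2 : word_over K S w1 -> word_over K S w2 -> word_over K S (w1 ++ w2).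
Proof. intros H1 H2 p Hp. apply in_app_or in Hp. destruct Hp; auto. Qed.

Lemma word_over_inv w : word_over K S w -> word_over K S (word_inv w).
Proof.
  intros Hw p Hp. apply in_rev, in_map_iff in Hp. destruct Hp as [q [<- Hq]]. apply (Hw q Hq).
Qed.

Lemma word_values_subgroup :
  is_subgroup K (fun k => exists w, word_over K S w /\ eval_word K w = k).
Proof.
  split; [|split].
  - exists []. split; [intros _ []|reflexivity].
  - intros x y [w1 [H1 <-]] [w2 [H2 <-]]. exists (w1 ++ w2).
    split; [apply word_over_app; auto | apply eval_word_app].
  - intros x [w [Hw <-]]. exists (word_inv w).
    split; [apply word_over_inv; auto | apply eval_word_inv].
Qed.

End Words.

(** * Britton's lemma *)

Definition tpow (K : Group) (t : K) (e : bool) : K := if e then t else ginv t.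

Fixpoint tword (A K : Group) (i : A -> K) (t : K) (g : A) (l : list (bool * A)) : K :=
  match l with
  | [] => i g
  | (e, g1) :: r => gmul (i g) (gmul (tpow K t e) (tword A K i t g1 r))
  end.

Definition side (A : Group) (P1 P2 : A -> Prop) (e : bool) : A -> Prop := if e then P1 else P2.

Fixpoint reduced (A : Group) (P1 P2 : A -> Prop) (l : list (bool * A)) : Prop :=
  match l with
  | [] => True
  | (e, g) :: r =>
      match r with
      | [] => True
      | (e', _) :: _ => e' = negb e -> ~ side A P1 P2 e g
      end /\ reduced A P1 P2 r
  end.

Section CosetRepresentatives.
Variable A : Group.
Variable P : A -> Prop.
Hypothesis sgP : is_subgroup A P.

Definition crep (g : A) : A :=
  epsilon (inhabits gone) (fun h => P (gmul g (ginv h)) /\ (P g -> h = gone)).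

Lemma crep_spec g : P (gmul g (ginv (crep g))) /\ (P g -> crep g = gone).
Proof.
  unfold crep. apply epsilon_spec.
  destruct (classic (P g)) as [Pg|Pg].
  - exists gone. rewrite ginv_one, gmul_one_r. auto.
  - exists g. rewrite gmul_inv_r. split; [apply subgroup_one, sgP | tauto].
Qed.

Lemma crep_coset g g' : P (gmul g' (ginv g)) -> crep g' = crep g.
Proof.
  intro Hg. unfold crep. f_equal. apply functional_extensionality; intro h.
  apply propositional_extensionality.
  assert (same_coset : forall x, P (gmul g' x) <-> P (gmul g x)).
  { intro x. split; intro Px.
    - replace (gmul g x) with (gmul (ginv (gmul g' (ginv g))) (gmul g' x)) by (gnorm; reflexivity).
      apply (subgroup_mul _ _ sgP); auto. apply (subgroup_inv _ _ sgP); auto.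
    - replace (gmul g' x) with (gmul (gmul g' (ginv g)) (gmul g x)) by (gnorm; reflexivity).
      apply (subgroup_mul _ _ sgP); auto. }
  pose proof (same_coset (ginv h)). pose proof (same_coset gone). rewrite !gmul_one_r in *.
  tauto.
Qed.

Lemma crep_idem g : crep (crep g) = crep g.
Proof.
  apply crep_coset. destruct (crep_spec g) as [H _].
  apply (subgroup_inv _ _ sgP) in H. rewrite ginv_mul, ginvK in H. exact H.
Qed.

Lemma crep_eq_one g : crep g = gone -> P g.
Proof. intro E. destruct (crep_spec g) as [H _]. rewrite E, ginv_one, gmul_one_r in H. exact H. Qed.

Lemma crep_mul_l y c : P y -> crep (gmul y c) = crep c.
Proof. intro Py. apply crep_coset. gnorm. exact Py. Qed.

Lemma crep_of_mem g : P g -> crep g = gone.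
Proof. apply crep_spec. Qed.

Lemma crep_quotient g : P (gmul g (ginv (crep g))).
Proof. apply crep_spec. Qed.

End CosetRepresentatives.

Section Britton.
Variable A : Group.
Variables P1 P2 : A -> Prop.
Variable beta : A -> A.
Hypothesis sg1 : is_subgroup A P1.
Hypothesis sg2 : is_subgroup A P2.
Hypothesis hbeta : sub_iso A P1 P2 beta.

Notation PP := (side A P1 P2).

Lemma side_subgroup e : is_subgroup A (PP e).
Proof. destruct e; assumption. Qed.

Definition beta_inv (y : A) : A := epsilon (inhabits gone) (fun x => P1 x /\ beta x = y).

Lemma beta_inv_spec y : P2 y -> P1 (beta_inv y) /\ beta (beta_inv y) = y.
Proof. intro Py. unfold beta_inv. apply epsilon_spec. apply hbeta, Py. Qed.

Lemma beta_invK x : P1 x -> beta_inv (beta x) = x.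
Proof.
  intro Px. destruct hbeta as [h1 [_ [hinj _]]].
  destruct (beta_inv_spec (beta x) (h1 x Px)) as [Q1 Q2]. apply hinj; auto.
Qed.

(** Conjugation by [t^e], defined on [side e]. *)
Definition tconj (e : bool) : A -> A := if e then beta else beta_inv.

Lemma tconj_side e x : PP e x -> PP (negb e) (tconj e x).
Proof. destruct e; simpl; intro H; [apply hbeta | apply beta_inv_spec]; exact H. Qed.

Lemma tconjK e x : PP e x -> tconj (negb e) (tconj e x) = x.
Proof. destruct e; simpl; intro H; [apply beta_invK | apply beta_inv_spec]; exact H. Qed.

(** Normal forms [(g, [(e1,c1); ...])] stand for [g t^e1 c1 t^e2 c2 ...], each [ci] being
    the chosen representative of its coset [side ei * ci]. *)
Definition NF := (A * list (bool * A))%type.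

Fixpoint nf_valid (l : list (bool * A)) : Prop :=
  match l with
  | [] => True
  | (e, c) :: r =>
      crep A (PP e) c = c /\
      match r with [] => True | (e', _) :: _ => e' = negb e -> c <> gone end /\
      nf_valid r
  end.

Definition nf_mul (h : A) (w : NF) : NF := (gmul h (fst w), snd w).

(** Left multiplication by [t^e]: write [g = x r] with [x] in [side e] and [r] its coset
    representative, move [x] across [t^e], and cancel [t^e t^-e] when [r = gone]. *)
Definition nf_t (e : bool) (w : NF) : NF :=
  let r := crep A (PP e) (fst w) in
  let x := gmul (fst w) (ginv r) in
  match snd w with
  | (e', c) :: l' =>
      if excluded_middle_informative (r = gone /\ e' = negb e)
      then (gmul (tconj e x) c, l')
      else (tconj e x, (e, r) :: snd w)
  | [] => (tconj e x, [(e, r)])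
  end.

Lemma nf_t_valid e w : nf_valid (snd w) -> nf_valid (snd (nf_t e w)).
Proof.
  destruct w as [g0 [|[e' c] l']]; unfold nf_t; simpl.
  - intros _. split; [apply crep_idem, side_subgroup | auto].
  - intros [V1 [V2 V3]].
    destruct (excluded_middle_informative _) as [D|D]; simpl; [exact V3|].
    split; [apply crep_idem, side_subgroup|]. split; [|auto].
    intros E Hr. apply D. auto.
Qed.

Lemma nf_tK e w : nf_valid (snd w) -> nf_t (negb e) (nf_t e w) = w.
Proof.
  destruct w as [g0 l]. simpl. intro V.
  pose proof (crep_quotient A (PP e) (side_subgroup e) g0) as Hx.
  set (r := crep A (PP e) g0) in *.
  set (x := gmul g0 (ginv r)) in *.
  assert (Rg : crep A (PP (negb e)) (tconj e x) = gone)
    by (apply crep_of_mem; [apply side_subgroup | apply tconj_side; auto]).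
  assert (Hxr : gmul x r = g0) by (unfold x; gnorm; reflexivity).
  pose proof (tconjK e x Hx) as Hgg.
  unfold nf_t at 2; simpl. fold r x.
  destruct l as [|[e' c] l'].
  - unfold nf_t; simpl. rewrite Rg, ginv_one, gmul_one_r.
    destruct (excluded_middle_informative _) as [_|D].
    + rewrite Hgg, Hxr. reflexivity.
    + exfalso. apply D. rewrite Bool.negb_involutive. auto.
  - destruct (excluded_middle_informative _) as [[D1 D2]|D].
    + subst e'. destruct V as [V1 [V2 V3]].
      unfold nf_t; simpl.
      rewrite (crep_mul_l _ _ (side_subgroup _)) by (apply tconj_side; auto).
      rewrite V1. gnorm. rewrite Hgg.
      assert (x = g0) as -> by (rewrite <- Hxr, D1, gmul_one_r; reflexivity).
      destruct l' as [|[e'' d] l'']; [reflexivity|].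
      destruct (excluded_middle_informative _) as [[D'1 D'2]|_]; [|reflexivity].
      exfalso. apply (V2 D'2 D'1).
    + unfold nf_t; simpl. rewrite Rg, ginv_one, gmul_one_r.
      destruct (excluded_middle_informative _) as [_|D'].
      * rewrite Hgg, Hxr. reflexivity.
      * exfalso. apply D'. rewrite Bool.negb_involutive. auto.
Qed.

Lemma nf_t_conj x w : P1 x -> nf_valid (snd w) ->
  nf_t true (nf_mul x (nf_t false w)) = nf_mul (beta x) w.
Proof.
  intros Px V. destruct w as [g0 l]; simpl in V.
  pose proof (crep_quotient A P2 sg2 g0) as Hy.
  set (r := crep A P2 g0) in *.
  set (y := gmul g0 (ginv r)) in *.
  destruct (beta_inv_spec y Hy) as [B1 B2].
  assert (Hyr : gmul y r = g0) by (unfold y; gnorm; reflexivity).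
  assert (Pxy : P1 (gmul x (beta_inv y))) by (apply (subgroup_mul _ _ sg1); auto).
  assert (R1 : crep A P1 (gmul x (beta_inv y)) = gone) by (apply crep_of_mem; auto).
  assert (Bm : beta (gmul x (beta_inv y)) = gmul (beta x) y)
    by (rewrite (proj1 (proj2 hbeta)), B2; auto).
  unfold nf_t at 2; simpl. fold r y.
  destruct l as [|[e' c] l'].
  - unfold nf_t, nf_mul; simpl. rewrite R1, ginv_one, gmul_one_r.
    destruct (excluded_middle_informative _) as [_|D]; [|exfalso; apply D; auto].
    simpl. rewrite Bm, gmulA_r, Hyr. reflexivity.
  - destruct (excluded_middle_informative _) as [[D1 D2]|D].
    + simpl in D2. subst e'. destruct V as [V1 [V2 V3]]. simpl in V1.
      assert (Ey : y = g0) by (rewrite <- Hyr, D1, gmul_one_r; reflexivity).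
      unfold nf_t, nf_mul; simpl.
      rewrite gmulA, (crep_mul_l _ _ sg1), V1 by exact Pxy. gnorm.
      rewrite Bm, Ey.
      destruct l' as [|[e'' d] l'']; [reflexivity|].
      destruct (excluded_middle_informative _) as [[D'1 D'2]|_]; [|reflexivity].
      exfalso. apply (V2 D'2 D'1).
    + unfold nf_t, nf_mul; simpl. rewrite R1, ginv_one, gmul_one_r.
      destruct (excluded_middle_informative _) as [_|D']; [|exfalso; apply D'; auto].
      simpl. rewrite Bm, gmulA_r, Hyr. reflexivity.
Qed.

Definition NFv := {w : NF | nf_valid (snd w)}.

Definition nfv_t (e : bool) (w : NFv) : NFv :=
  exist _ (nf_t e (proj1_sig w)) (nf_t_valid e _ (proj2_sig w)).

Definition nfv_mul (h : A) (w : NFv) : NFv :=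
  exist (fun w => nf_valid (snd w)) (nf_mul h (proj1_sig w)) (proj2_sig w).

Lemma nfv_eq (w w' : NFv) : proj1_sig w = proj1_sig w' -> w = w'.
Proof. apply eq_sig_hprop. intros; apply proof_irrelevance. Qed.

Definition perm_t : sym_group NFv.
  refine (mkPerm NFv (nfv_t true) (nfv_t false) _ _); intro w; apply nfv_eq;
  [apply (nf_tK false) | apply (nf_tK true)]; apply proj2_sig.
Defined.

Definition perm_base (h : A) : sym_group NFv.
  refine (mkPerm NFv (nfv_mul h) (nfv_mul (ginv h)) _ _);
  intro w; apply nfv_eq; destruct w as [[g l] V]; simpl; unfold nf_mul; simpl; gnorm; reflexivity.
Defined.

Lemma perm_base_hom : is_hom A (sym_group NFv) perm_base.
Proof.
  intros x y. apply perm_ext; intro w. apply nfv_eq. simpl. unfold nf_mul; simpl.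
  rewrite gmulA. reflexivity.
Qed.

Lemma perm_t_conj x : P1 x ->
  gmul perm_t (gmul (perm_base x) (ginv perm_t)) = perm_base (beta x).
Proof. intro Px. apply perm_ext; intro w. apply nfv_eq, nf_t_conj, proj2_sig; exact Px. Qed.

Fixpoint nf_tword (g : A) (l : list (bool * A)) (w : NF) : NF :=
  match l with
  | [] => nf_mul g w
  | (e, g1) :: r => nf_mul g (nf_t e (nf_tword g1 r w))
  end.

Lemma nf_tword_head l : forall e g1, reduced A P1 P2 ((e, g1) :: l) ->
  exists x r m, nf_t e (nf_tword g1 l (gone, [])) = (x, (e, r) :: m) /\ PP (negb e) x.
Proof.
  induction l as [|[e2 g2] l2 IH]; intros e g1 Red.
  - do 3 eexists; split; [reflexivity|]. apply tconj_side, crep_quotient, side_subgroup.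
  - destruct Red as [Rd1 Rd2].
    destruct (IH e2 g2 Rd2) as [x2 [r2 [m [E1 E3]]]].
    simpl. rewrite E1. unfold nf_t at 1, nf_mul; simpl.
    destruct (excluded_middle_informative _) as [[D1 D2]|D].
    + exfalso. apply (Rd1 D2).
      apply crep_eq_one in D1; [|apply side_subgroup].
      rewrite D2, Bool.negb_involutive in E3.
      replace g1 with (gmul (gmul g1 x2) (ginv x2)) by (gnorm; reflexivity).
      apply subgroup_mul; [apply side_subgroup | exact D1 |].
      apply subgroup_inv; [apply side_subgroup | exact E3].
    + do 3 eexists; split; [reflexivity|]. apply tconj_side, crep_quotient, side_subgroup.
Qed.

Theorem britton (K : Group) (i : A -> K) (t : K) : is_HNN A P1 beta K i t ->
  forall g l, reduced A P1 P2 l -> (l <> [] \/ g <> gone) -> tword A K i t g l <> gone.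
Proof.
  intros [_ [_ U]] g l Red NT E.
  destruct (U _ perm_base perm_t perm_base_hom perm_t_conj) as [phi [phom [phi_i [phi_t _]]]].
  assert (Hact : forall l0 g0 w, proj1_sig (pfun (phi (tword A K i t g0 l0)) w)
                                 = nf_tword g0 l0 (proj1_sig w)).
  { intro l0. induction l0 as [|[e g1] r IH]; intros g0 w; simpl; rewrite ?phom, phi_i;
      [reflexivity|].
    simpl. do 2 f_equal.
    destruct e; simpl; rewrite ?(hom_inv _ _ _ phom), phi_t; simpl; f_equal; apply IH. }
  specialize (Hact l g (exist (fun w : NF => nf_valid (snd w)) (gone, []) I)).
  rewrite E, (hom_one _ _ _ phom) in Hact. simpl in Hact.
  destruct l as [|[e g1] r].
  - destruct NT as [NT|NT]; [apply NT; reflexivity|].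
    injection Hact as Hg. rewrite gmul_one_r in Hg. auto.
  - destruct (nf_tword_head r e g1 Red) as [x0 [r0 [m [E1 _]]]].
    simpl in Hact. rewrite E1 in Hact. discriminate.
Qed.

End Britton.

(** * Reduced forms in HNN extensions *)

Section HNNReducedForms.
Variable A : Group.
Variables P1 P2 : A -> Prop.
Variable alpha : A -> A.
Variable K : Group.
Variable i : A -> K.
Variable t : K.
Hypothesis HK : is_HNN A P1 alpha K i t.

Lemma HNN_hom : is_hom A K i.
Proof. apply HK. Qed.

Lemma HNN_generates (SA : list A) : generates A SA -> generates K (map i SA ++ [t]).
Proof.
  intros genA k.
  set (S := map i SA ++ [t]).
  set (L := fun k => exists w, word_over K S w /\ eval_word K w = k).
  pose proof (word_values_subgroup K S) as sgL.
  set (KL := subgroup_group K L sgL).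
  assert (Li : forall h, L (i h)).
  { intro h. destruct (genA h) as [w [Hw <-]].
    exists (map (fun p => (fst p, i (snd p))) w). split; [|symmetry; apply eval_word_hom, HNN_hom].
    intros p Hp. apply in_map_iff in Hp. destruct Hp as [q [<- Hq]].
    apply in_or_app. left. apply (in_map i), (Hw q Hq). }
  assert (Lt : L t).
  { exists [(true, t)]. split; [|apply gmul_one_r].
    intros p [<-|[]]. apply in_or_app. right. left. reflexivity. }
  (* By uniqueness, the map [K -> KL] followed by the inclusion is the identity of [K]. *)
  destruct HK as [ih [rel U]].
  destruct (U KL (fun h => exist _ (i h) (Li h)) (exist _ t Lt)) as [phi [phom [phi_i [phi_t _]]]].
  { intros x y. apply eq_sig_hprop; [intros; apply proof_irrelevance | apply ih]. }
  { intros x Px. apply eq_sig_hprop; [intros; apply proof_irrelevance | apply rel, Px]. }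
  destruct (U K i t ih rel) as [phi0 [_ [_ [_ uniq]]]].
  assert (Eid : k = phi0 k) by (apply (uniq (fun k => k)); auto; intros x y; reflexivity).
  assert (Ephi : proj1_sig (phi k) = phi0 k).
  { apply (uniq (fun k => proj1_sig (phi k))).
    - intros x y. rewrite phom. reflexivity.
    - intro x. rewrite phi_i. reflexivity.
    - rewrite phi_t. reflexivity. }
  rewrite Eid, <- Ephi. apply (proj2_sig (phi k)).
Qed.

Lemma tword_mul_l a g l : gmul (i a) (tword A K i t g l) = tword A K i t (gmul a g) l.
Proof.
  destruct l as [|[e g1] r]; simpl; rewrite HNN_hom; [reflexivity|]. rewrite gmulA. reflexivity.
Qed.

Lemma HNN_tword (SA : list A) : generates A SA -> forall k, exists g l, tword A K i t g l = k.
Proof.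
  intros genA k. destruct (HNN_generates SA genA k) as [w [Hw <-]].
  induction w as [|[b x] w IH]; simpl.
  - exists gone, []. apply (hom_one _ _ _ HNN_hom).
  - destruct IH as [g [l <-]]; [intros p Hp; apply Hw; right; exact Hp|].
    assert (Hx : In x (map i SA ++ [t])) by (apply (Hw (b, x)); left; reflexivity).
    apply in_app_or in Hx. destruct Hx as [Hx|[<-|[]]].
    + apply in_map_iff in Hx. destruct Hx as [h [<- _]].
      exists (gmul (if b then h else ginv h) g), l. rewrite <- tword_mul_l.
      destruct b; rewrite ?(hom_inv _ _ _ HNN_hom); reflexivity.
    + exists gone, ((b, g) :: l). simpl. rewrite (hom_one _ _ _ HNN_hom), gmul1.
      destruct b; reflexivity.
Qed.

Hypothesis halpha : sub_iso A P1 P2 alpha.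

Lemma tword_pinch e g : side A P1 P2 e g ->
  exists p, gmul (tpow K t e) (gmul (i g) (tpow K t (negb e))) = i p.
Proof.
  destruct HK as [_ [rel _]].
  destruct e; simpl; intro Hg.
  - exists (alpha g). apply rel, Hg.
  - destruct halpha as [_ [_ [_ onto]]]. destruct (onto g Hg) as [x [Px <-]].
    exists x. rewrite <- (rel x Px). gnorm. reflexivity.
Qed.

Lemma tword_reduce l : forall g,
  exists g' l', reduced A P1 P2 l' /\ tword A K i t g l = tword A K i t g' l'.
Proof.
  induction l as [|[e g1] r IH]; intro g; [exists g, []; simpl; auto|].
  destruct (IH g1) as [g2 [[|[e3 g3] l3] [R2 E2]]]; simpl; rewrite E2.
  - exists g, [(e, g2)]. simpl. auto.
  - destruct (classic (e3 = negb e /\ side A P1 P2 e g2)) as [[-> D2]|D].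
    + destruct (tword_pinch e g2 D2) as [p Ep].
      exists (gmul (gmul g p) g3), l3. split; [apply R2|].
      rewrite <- !tword_mul_l. simpl. rewrite HNN_hom, <- Ep. gnorm. reflexivity.
    + exists g, ((e, g2) :: (e3, g3) :: l3). split; [|reflexivity].
      split; [|exact R2]. intros E3 HP. apply D; auto.
Qed.

Lemma HNN_reduced_forms (SA : list A) : generates A SA -> forall Q : list K,
  exists base : list A, forall k, In k Q -> exists g l,
    reduced A P1 P2 l /\ tword A K i t g l = k /\
    In g base /\ forall p, In p l -> In (snd p) base.
Proof.
  intros genA Q. induction Q as [|k Q [base IH]]; [exists []; intros k []|].
  destruct (HNN_tword SA genA k) as [g0 [l0 E0]].
  destruct (tword_reduce l0 g0) as [g [l [Red E]]].
  exists (g :: map snd l ++ base). intros k' [<-|Hk].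
  - exists g, l. repeat split; [exact Red | congruence | left; reflexivity |].
    intros p Hp. right. apply in_or_app. left. apply in_map, Hp.
  - destruct (IH k' Hk) as [g' [l' [R' [E' [Hg' Hl']]]]].
    exists g', l'. repeat split; auto; [right | intros p Hp; right]; apply in_or_app; right; auto.
Qed.

End HNNReducedForms.

(** * Finite subgroups of hyperbolic groups *)

Fixpoint tuples {X : Type} (B : list X) (n : nat) : list (list X) :=
  match n with
  | 0 => [[]]
  | S n => map (fun p => fst p :: snd p) (list_prod B (tuples B n))
  end.

Lemma in_tuples {X : Type} (B l : list X) : incl l B -> In l (tuples B (length l)).
Proof.
  induction l as [|x l IH]; simpl; intro Hl; [left; reflexivity|].
  apply (in_map (fun p => fst p :: snd p) _ (x, l)), in_prod.
  - apply Hl. left. reflexivity.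
  - apply IH. intros y Hy. apply Hl. right. exact Hy.
Qed.

Definition letters (A : Group) (gens : list A) : list (bool * A) :=
  map (pair true) gens ++ map (pair false) gens.

Definition ball (A : Group) (gens : list A) (n : nat) : list A :=
  map (eval_word A) (flat_map (tuples (letters A gens)) (seq 0 (S n))).

Lemma in_ball (A : Group) (gens : list A) (g : A) (n : nat) :
  word_len_le A gens g n -> In g (ball A gens n).
Proof.
  intros [w [Hw [Hl <-]]]. apply in_map, in_flat_map. exists (length w). split.
  - apply in_seq. lia.
  - apply in_tuples. intros [b s] Hp. apply in_or_app.
    destruct b; [left | right]; apply in_map, (Hw (_, s) Hp).
Qed.

Section WordMetric.
Variable G : Group.
Variable SG : list G.
Hypothesis genG : generates G SG.

Lemma wlen_exists g : exists n, word_len_le G SG g n /\ forall m, word_len_le G SG g m -> n <= m.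
Proof.
  destruct (dec_inh_nat_subset_has_unique_least_element (word_len_le G SG g)) as [n [Hn _]].
  - intro n. apply classic.
  - destruct (genG g) as [w [Hw E]]. exists (length w), w. auto.
  - exists n. exact Hn.
Qed.

Definition wlen (g : G) : nat := proj1_sig (constructive_indefinite_description _ (wlen_exists g)).

Lemma wlen_spec g : word_len_le G SG g (wlen g) /\ forall m, word_len_le G SG g m -> wlen g <= m.
Proof. unfold wlen. destruct (constructive_indefinite_description _ _); simpl; auto. Qed.

Lemma wlen_min g m : word_len_le G SG g m -> wlen g <= m.
Proof. apply wlen_spec. Qed.

Lemma wlen_inv g : wlen (ginv g) <= wlen g.
Proof.
  apply wlen_min. destruct (wlen_spec g) as [[w [Hw [Hl <-]]] _].
  exists (word_inv G w). split; [apply word_over_inv, Hw|]. split.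
  - unfold word_inv. rewrite length_rev, length_map. exact Hl.
  - apply eval_word_inv.
Qed.

Definition wdist (x y : G) : nat := wlen (gmul (ginv x) y).

Lemma wdist_sym x y : wdist x y = wdist y x.
Proof.
  assert (E : forall x y : G, ginv (gmul (ginv x) y) = gmul (ginv y) x)
    by (intros; gnorm; reflexivity).
  unfold wdist. apply Nat.le_antisymm; [rewrite <- (E y x) | rewrite <- (E x y)]; apply wlen_inv.
Qed.

Lemma word_dist_wdist x y : word_dist G SG x y (wdist x y).
Proof. apply wlen_spec. Qed.

Lemma wdist_mul_l f x y : wdist (gmul f x) (gmul f y) = wdist x y.
Proof. unfold wdist. f_equal. gnorm. reflexivity. Qed.

Lemma wdist_midpoint x y : exists m,
  wdist x m <= wdist x y - wdist x y / 2 /\ wdist m y <= wdist x y - wdist x y / 2.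
Proof.
  set (D := wdist x y).
  destruct (wlen_spec (gmul (ginv x) y)) as [[w [Hw [Hl E]]] _]. fold (wdist x y) D in Hl.
  set (k := D / 2).
  assert (Hk : k <= D - k) by (pose proof (Nat.Div0.mul_div_le D 2); unfold k; lia).
  assert (Hfirst : word_over G SG (firstn k w)).
  { intros p Hp. apply Hw. rewrite <- (firstn_skipn k w). apply in_or_app. left. exact Hp. }
  assert (Hskip : word_over G SG (skipn k w)).
  { intros p Hp. apply Hw. rewrite <- (firstn_skipn k w). apply in_or_app. right. exact Hp. }
  exists (gmul x (eval_word G (firstn k w))). split.
  - unfold wdist. rewrite gmulK_l. apply wlen_min. exists (firstn k w).
    split; [exact Hfirst|].
    split; [rewrite length_firstn; lia | reflexivity].
  - unfold wdist. apply wlen_min. exists (skipn k w).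
    split; [exact Hskip|].
    split; [rewrite length_skipn; lia |].
    rewrite <- (gmulK_l G (eval_word G (firstn k w)) (eval_word G (skipn k w))), <- eval_word_app,
      firstn_skipn, E.
    gnorm. reflexivity.
Qed.

Variable delta : nat.
Hypothesis four_point : forall (x y z w : G) (dxy dzw dxz dyw dxw dyz : nat),
  word_dist G SG x y dxy -> word_dist G SG z w dzw ->
  word_dist G SG x z dxz -> word_dist G SG y w dyw ->
  word_dist G SG x w dxw -> word_dist G SG y z dyz ->
  dxy + dzw <= Nat.max (dxz + dyw) (dxw + dyz) + 2 * delta.

Lemma wdist_midpoint_close a x y m r :
  wdist x m <= wdist x y - wdist x y / 2 -> wdist m y <= wdist x y - wdist x y / 2 ->
  wdist x a <= r -> wdist y a <= r -> wdist m a + wdist x y / 2 <= r + 2 * delta.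
Proof.
  intros Hxm Hmy Hxa Hya.
  pose proof (four_point a m x y _ _ _ _ _ _ (word_dist_wdist a m) (word_dist_wdist x y)
    (word_dist_wdist a x) (word_dist_wdist m y) (word_dist_wdist a y) (word_dist_wdist m x)) as F.
  rewrite (wdist_sym a m), (wdist_sym a x), (wdist_sym a y), (wdist_sym m x) in F.
  pose proof (Nat.Div0.mul_div_le (wdist x y) 2). lia.
Qed.

(** Conjugate by a quasi-centre [q] of [P], i.e. a point minimising [max_(a in P) wdist q a]. *)
Lemma finite_subgroup_conj_ball (P : G -> Prop) : finite_subgroup G P ->
  exists q, forall z, P z -> word_len_le G SG (conjg G z q) (4 * delta + 1).
Proof.
  intros [sgP [lP HlP]].
  set (radius := fun r => exists q, forall a, P a -> wdist q a <= r).
  destruct (dec_inh_nat_subset_has_unique_least_element radius) as [r0 [[[q Hq] Hmin] _]].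
  { intro r. apply classic. }
  { exists (fold_right (fun a r => Nat.max (wlen a) r) 0 lP), gone. intros a Pa.
    unfold wdist. rewrite ginv_one, gmul1. clear - HlP Pa.
    specialize (HlP a Pa). induction lP as [|b l IH]; [destruct HlP|].
    destruct HlP as [<-|H]; simpl; [lia|]. specialize (IH H). lia. }
  exists q. intros f Pf.
  assert (Hfq : forall a, P a -> wdist (gmul f q) a <= r0).
  { intros a Pa. rewrite <- (wdist_mul_l (ginv f) (gmul f q) a), gmulK_l. apply Hq.
    apply (subgroup_mul _ _ sgP); [apply (subgroup_inv _ _ sgP), Pf | exact Pa]. }
  set (D := wdist q (gmul f q)).
  destruct (wdist_midpoint q (gmul f q)) as [m [Hm1 Hm2]].
  assert (Hma : forall a, P a -> wdist m a + D / 2 <= r0 + 2 * delta)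
    by (intros a Pa; apply wdist_midpoint_close; auto).
  assert (HD : D / 2 <= 2 * delta).
  { destruct (le_lt_dec (D / 2) (2 * delta)) as [L|L]; [exact L|].
    assert (r0 <= r0 + 2 * delta - D / 2).
    { apply Hmin. exists m. intros a Pa. specialize (Hma a Pa). lia. }
    pose proof (Hma gone (subgroup_one _ _ sgP)). lia. }
  destruct (wlen_spec (gmul (ginv q) (gmul f q))) as [[w [Hw [Hl E]]] _].
  exists w. repeat split; auto.
  pose proof (Nat.div_mod_eq D 2). pose proof (Nat.mod_upper_bound D 2). unfold D, wdist in *. lia.
Qed.

End WordMetric.

(** * Limit maps between HNN extensions *)

Lemma pigeonhole_directed {X Y : Type} (C : list Y) (R : list X -> Y -> Prop) :
  (forall L L' y, incl L L' -> R L' y -> R L y) ->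
  (forall L, exists y, In y C /\ R L y) -> exists y, forall L, R L y.
Proof.
  revert R. induction C as [|c C IH]; intros R mono HC; [destruct (HC []) as [y [[] _]]|].
  destruct (classic (forall L, R L c)) as [Hc|Hc]; [exists c; exact Hc|].
  apply not_all_ex_not in Hc. destruct Hc as [L0 HL0].
  destruct (IH (fun L y => R (L0 ++ L) y)) as [y Hy].
  - intros L L' y Hinc. apply mono, incl_app; [apply incl_appl, incl_refl | apply incl_appr, Hinc].
  - intro L. destruct (HC (L0 ++ L)) as [y [[<-|Hy] HR]]; [|exists y; auto].
    exfalso. apply HL0, (mono L0 (L0 ++ L)); [apply incl_appl, incl_refl | exact HR].
  - exists y. intro L. apply (mono L (L0 ++ L)); [apply incl_appr, incl_refl | apply Hy].
Qed.

Section Transfer.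
Variables A B : Group.
Variable k : A -> B.
Variable u : B.

(** Rewrites a [t]-word over [A] as a [t']-word over [B] when [t] is sent to [u t']: each
    [u] is absorbed into the base letter before [t'], each [u^-1] into the one after [t'^-1]. *)
Fixpoint transfer (b : B) (l : list (bool * A)) : B * list (bool * B) :=
  match l with
  | [] => (b, [])
  | (e, g1) :: r =>
      let p := transfer (if e then k g1 else gmul (ginv u) (k g1)) r in
      (if e then gmul b u else b, (e, fst p) :: snd p)
  end.

Lemma transfer_length l : forall b, length (snd (transfer b l)) = length l.
Proof. induction l as [|[e g1] r IH]; intro b; simpl; rewrite ?IH; reflexivity. Qed.

Variables F1 F2 : A -> Prop.
Variables F1' F2' : B -> Prop.
Variable R : A -> Prop.
Hypothesis reflect1 : forall g, R g -> F1' (k g) -> F1 g.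
Hypothesis reflect2 : forall g, R g -> F2' (gmul (gmul (ginv u) (k g)) u) -> F2 g.

Lemma transfer_reduced l : forall b, reduced A F1 F2 l -> (forall p, In p l -> R (snd p)) ->
  reduced B F1' F2' (snd (transfer b l)).
Proof.
  induction l as [|[e g1] r IH]; intros b Red HR; simpl; [exact I|].
  destruct Red as [Rd1 Rd2].
  assert (Rg1 : R g1) by (apply (HR (e, g1)); left; reflexivity).
  split; [|apply IH; auto; intros; apply HR; right; auto].
  destruct r as [|[e2 g2] r2]; simpl; [exact I|].
  destruct e, e2; simpl; try discriminate; intros _ HF; apply (Rd1 eq_refl); simpl; auto.
Qed.

Variables K K' : Group.
Variables (i : A -> K) (t : K) (i' : B -> K') (t' : K').
Variable phi : K -> K'.
Hypothesis i'_hom : is_hom B K' i'.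
Hypothesis phi_hom : is_hom K K' phi.
Hypothesis phi_i : forall x, phi (i x) = i' (k x).
Hypothesis phi_t : phi t = gmul (i' u) t'.

Lemma transfer_tword l : forall a g,
  tword B K' i' t' (fst (transfer (gmul a (k g)) l)) (snd (transfer (gmul a (k g)) l))
  = gmul (i' a) (phi (tword A K i t g l)).
Proof.
  induction l as [|[[|] g1] r IH]; intros a g; simpl.
  - rewrite phi_i, i'_hom. reflexivity.
  - rewrite <- (gmul1 B (k g1)), IH, !phi_hom, phi_i, phi_t, !i'_hom, (hom_one _ _ _ i'_hom).
    gnorm. reflexivity.
  - rewrite IH, !phi_hom, phi_i, (hom_inv _ _ _ phi_hom), phi_t, !i'_hom, (hom_inv _ _ _ i'_hom).
    gnorm. reflexivity.
Qed.

End Transfer.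

Definition inj_on (A B : Group) (f : A -> B) (L : list A) : Prop :=
  forall x y, In x L -> In y L -> f x = f y -> x = y.

Lemma inj_on_incl (A B : Group) (f : A -> B) (L L' : list A) :
  incl L L' -> inj_on A B f L' -> inj_on A B f L.
Proof. intros Hinc Hf x y Hx Hy. apply Hf; apply Hinc; assumption. Qed.

Section Codes.
Variables G H : Group.
Variables F1 F2 : H -> Prop.
Variable alpha : H -> H.
Variables lF1 lF2 : list H.
Hypothesis HlF1 : forall x, In x lF1 <-> F1 x.
Hypothesis HlF2 : forall x, In x lF2 <-> F2 x.
Hypothesis sgF1 : is_subgroup H F1.
Hypothesis sgF2 : is_subgroup H F2.
Hypothesis halpha : sub_iso H F1 F2 alpha.

Definition code (f : H -> G) (q1 q2 : G) : list (G * G) * list G :=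
  (map (fun y => (conjg G (f y) q1, conjg G (f (alpha y)) q2)) lF1,
   map (fun y => conjg G (f y) q2) lF2).

Definition code_dom (c : list (G * G) * list G) (x : G) : Prop := In x (map fst (fst c)).
Definition code_cod (c : list (G * G) * list G) (x : G) : Prop := In x (snd c).
Definition code_map (c : list (G * G) * list G) (x : G) : G :=
  epsilon (inhabits x) (fun y => In (x, y) (fst c)).

Definition realizes (L : list H) (c : list (G * G) * list G) : Prop :=
  exists f q1 q2, is_hom H G f /\ inj_on H G f (L ++ lF1 ++ lF2) /\ code f q1 q2 = c.

Lemma realizes_incl L L' c : incl L L' -> realizes L' c -> realizes L c.
Proof.
  intros Hinc [f [q1 [q2 [hf [finj Ec]]]]]. exists f, q1, q2. repeat split; auto.
  apply (inj_on_incl _ _ _ _ _ (incl_app_app Hinc (incl_refl _)) finj).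
Qed.

Section Realization.
Variable L : list H.
Variable f : H -> G.
Variables q1 q2 : G.
Hypothesis hf : is_hom H G f.
Hypothesis finj : inj_on H G f (L ++ lF1 ++ lF2).

Lemma F1_in_dom y : F1 y -> In y (L ++ lF1 ++ lF2).
Proof. intro Fy. apply in_or_app. right. apply in_or_app. left. apply HlF1, Fy. Qed.

Lemma F2_in_dom y : F2 y -> In y (L ++ lF1 ++ lF2).
Proof. intro Fy. apply in_or_app. right. apply in_or_app. right. apply HlF2, Fy. Qed.

Lemma code_dom_iff x :
  code_dom (code f q1 q2) x <-> image H G (fun y => conjg G (f y) q1) F1 x.
Proof.
  unfold code_dom, code, image; simpl. rewrite map_map, in_map_iff.
  split; intros [y [E Hy]]; exists y; split; (apply HlF1 || idtac); auto.
Qed.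

Lemma code_cod_iff x :
  code_cod (code f q1 q2) x <-> image H G (fun y => conjg G (f y) q2) F2 x.
Proof.
  unfold code_cod, code, image; simpl. rewrite in_map_iff.
  split; intros [y [E Hy]]; exists y; split; (apply HlF2 || idtac); auto.
Qed.

Lemma code_map_conjg y : F1 y ->
  code_map (code f q1 q2) (conjg G (f y) q1) = conjg G (f (alpha y)) q2.
Proof.
  intro Fy. unfold code_map.
  assert (Hpair : In (conjg G (f y) q1, conjg G (f (alpha y)) q2) (fst (code f q1 q2)))
    by (apply in_map_iff; exists y; split; [reflexivity | apply HlF1, Fy]).
  pose proof (epsilon_spec (inhabits (conjg G (f y) q1))
    (fun z => In (conjg G (f y) q1, z) (fst (code f q1 q2)))
    (ex_intro _ (conjg G (f (alpha y)) q2) Hpair)) as Hz.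
  simpl in Hz. apply in_map_iff in Hz. destruct Hz as [y' [E Hy']]. injection E as E1 E2.
  apply HlF1 in Hy'. apply conjg_inj, finj in E1; try apply F1_in_dom; auto.
  subst y'. symmetry. exact E2.
Qed.

Lemma conjg_f_hom q : is_hom H G (fun y => conjg G (f y) q).
Proof. apply (hom_comp H G G f (fun z => conjg G z q)); [exact hf | apply conjg_hom]. Qed.

Lemma code_dom_finite : finite_subgroup G (code_dom (code f q1 q2)).
Proof.
  apply (finite_subgroup_eqv _ _ _ (fun x => iff_sym (code_dom_iff x))).
  apply finite_subgroup_image; [apply conjg_f_hom | split; [exact sgF1 | exists lF1; apply HlF1]].
Qed.

Lemma code_cod_finite : finite_subgroup G (code_cod (code f q1 q2)).
Proof.
  apply (finite_subgroup_eqv _ _ _ (fun x => iff_sym (code_cod_iff x))).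
  apply finite_subgroup_image; [apply conjg_f_hom | split; [exact sgF2 | exists lF2; apply HlF2]].
Qed.

Lemma code_sub_iso :
  sub_iso G (code_dom (code f q1 q2)) (code_cod (code f q1 q2)) (code_map (code f q1 q2)).
Proof.
  destruct halpha as [a_in [a_mul [a_inj a_onto]]].
  split; [|split; [|split]].
  - intros x Hx. apply code_dom_iff in Hx. destruct Hx as [y [Fy ->]].
    rewrite code_map_conjg by exact Fy. apply code_cod_iff. exists (alpha y). auto.
  - intros x1 x2 Hx1 Hx2. apply code_dom_iff in Hx1, Hx2.
    destruct Hx1 as [y1 [Fy1 ->]], Hx2 as [y2 [Fy2 ->]].
    rewrite <- (conjg_f_hom q1), !code_map_conjg, a_mul, (conjg_f_hom q2)
      by (apply subgroup_mul || idtac; auto).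
    reflexivity.
  - intros x1 x2 Hx1 Hx2 E. apply code_dom_iff in Hx1, Hx2.
    destruct Hx1 as [y1 [Fy1 ->]], Hx2 as [y2 [Fy2 ->]].
    rewrite !code_map_conjg in E by assumption.
    apply conjg_inj, finj in E; try apply F2_in_dom, a_in; auto.
    apply a_inj in E; auto. subst. reflexivity.
  - intros z Hz. apply code_cod_iff in Hz. destruct Hz as [w [Fw ->]].
    destruct (a_onto w Fw) as [y [Fy <-]].
    exists (conjg G (f y) q1).
    split; [apply code_dom_iff; exists y; auto | apply code_map_conjg, Fy].
Qed.

Lemma code_dom_reflect h : In h L -> code_dom (code f q1 q2) (conjg G (f h) q1) -> F1 h.
Proof.
  intros Hh Hd. apply code_dom_iff in Hd. destruct Hd as [y [Fy E]].
  apply conjg_inj, finj in E;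
    [subst; exact Fy | apply in_or_app; left; exact Hh | apply F1_in_dom, Fy].
Qed.

Lemma code_cod_reflect h : In h L -> code_cod (code f q1 q2) (conjg G (f h) q2) -> F2 h.
Proof.
  intros Hh Hd. apply code_cod_iff in Hd. destruct Hd as [y [Fy E]].
  apply conjg_inj, finj in E;
    [subst; exact Fy | apply in_or_app; left; exact Hh | apply F2_in_dom, Fy].
Qed.

End Realization.

Section StableCode.
Variable SG : list G.
Hypothesis genG : generates G SG.
Variable delta : nat.
Hypothesis four_point : forall (x y z w : G) (dxy dzw dxz dyw dxw dyz : nat),
  word_dist G SG x y dxy -> word_dist G SG z w dzw ->
  word_dist G SG x z dxz -> word_dist G SG y w dyw ->
  word_dist G SG x w dxw -> word_dist G SG y z dyz ->
  dxy + dzw <= Nat.max (dxz + dyw) (dxw + dyz) + 2 * delta.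
Hypothesis residual : fully_residually G H.

Lemma conj_image_in_ball f (F : H -> Prop) (lF : list H) : is_hom H G f -> is_subgroup H F ->
  (forall x, In x lF <-> F x) ->
  exists q, forall y, F y -> In (conjg G (f y) q) (ball G SG (4 * delta + 1)).
Proof.
  intros hf sgF HlF.
  destruct (finite_subgroup_conj_ball G SG genG delta four_point (image H G f F)) as [q Hq].
  { apply finite_subgroup_image; [exact hf | split; [exact sgF | exists lF; apply HlF]]. }
  exists q. intros y Fy. apply in_ball, Hq. exists y. auto.
Qed.

(** Codes of conjugated finite subgroups range over a finite set, so one of them is realized
    by homomorphisms injective on arbitrarily large finite sets. *)
Lemma stable_code : exists c, forall L, realizes L c.
Proof.
  set (B := ball G SG (4 * delta + 1)).
  apply (pigeonhole_directed
    (list_prod (tuples (list_prod B B) (length lF1)) (tuples B (length lF2)))).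
  { intros L L' c. apply realizes_incl. }
  intro L. destruct (residual (L ++ lF1 ++ lF2)) as [f [hf finj]].
  destruct (conj_image_in_ball f F1 lF1 hf sgF1 HlF1) as [q1 Hq1].
  destruct (conj_image_in_ball f F2 lF2 hf sgF2 HlF2) as [q2 Hq2].
  exists (code f q1 q2). split; [|exists f, q1, q2; auto].
  apply in_prod; [rewrite <- (length_map (fun y => (conjg G (f y) q1, conjg G (f (alpha y)) q2)))
                 | rewrite <- (length_map (fun y => conjg G (f y) q2))];
  apply in_tuples; intros p Hp; apply in_map_iff in Hp; destruct Hp as [y [<- Hy]].
  - apply HlF1 in Hy. apply in_prod; [apply Hq1, Hy | apply Hq2, halpha, Hy].
  - apply Hq2, HlF2, Hy.
Qed.

End StableCode.

Lemma realized_code_sub_iso L c : realizes L c ->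
  finite_subgroup G (code_dom c) /\ finite_subgroup G (code_cod c) /\
  sub_iso G (code_dom c) (code_cod c) (code_map c).
Proof.
  intros [f [q1 [q2 [hf [finj <-]]]]].
  split; [|split];
    [apply code_dom_finite | apply code_cod_finite | apply (code_sub_iso L)]; assumption.
Qed.

Section CodeHNN.
Variables (K : Group) (i : H -> K) (t : K).
Hypothesis HK : is_HNN H F1 alpha K i t.
Variable c : list (G * G) * list G.
Variables (K' : Group) (i' : G -> K') (t' : K').
Hypothesis HK' : is_HNN G (code_dom c) (code_map c) K' i' t'.

Section Realized.
Variable L : list H.
Variable f : H -> G.
Variables q1 q2 : G.
Hypothesis hf : is_hom H G f.
Hypothesis finj : inj_on H G f (L ++ lF1 ++ lF2).
Hypothesis Ec : code f q1 q2 = c.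

Lemma code_HNN_hom : exists phi, is_hom K K' phi /\
  (forall h, phi (i h) = i' (conjg G (f h) q1)) /\ phi t = gmul (i' (gmul (ginv q1) q2)) t'.
Proof.
  destruct HK' as [i'_hom [rel' _]]. destruct HK as [_ [_ U]].
  destruct (U K' (fun h => i' (conjg G (f h) q1)) (gmul (i' (gmul (ginv q1) q2)) t'))
    as [phi [phom [phi_i [phi_t _]]]]; [| |exists phi; auto].
  - apply (hom_comp H G K' (fun h => conjg G (f h) q1) i'); [apply conjg_f_hom | ]; assumption.
  - intros x Fx. subst c.
    assert (Hdom : code_dom (code f q1 q2) (conjg G (f x) q1))
      by (apply code_dom_iff; exists x; auto).
    transitivity (gmul (i' (gmul (ginv q1) q2))
      (gmul (gmul t' (gmul (i' (conjg G (f x) q1)) (ginv t'))) (ginv (i' (gmul (ginv q1) q2))))).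
    { gnorm. reflexivity. }
    rewrite rel', (code_map_conjg L) by assumption.
    rewrite <- (hom_inv _ _ _ i'_hom), <- !i'_hom. f_equal. unfold conjg. gnorm. reflexivity.
Qed.

Variable phi : K -> K'.
Hypothesis phi_hom : is_hom K K' phi.
Hypothesis phi_i : forall h, phi (i h) = i' (conjg G (f h) q1).
Hypothesis phi_t : phi t = gmul (i' (gmul (ginv q1) q2)) t'.

(** [phi] sends reduced words to reduced words, which Britton's lemma in [K'] keeps nontrivial. *)
Lemma code_HNN_hom_nontrivial g l :
  reduced H F1 F2 l -> In g L -> (forall p, In p l -> In (snd p) L) ->
  (l <> [] \/ g <> gone) -> phi (tword H K i t g l) <> gone.
Proof.
  intros Red Hg Hl NT E.
  destruct (realized_code_sub_iso L c) as [[sg1 _] [[sg2 _] hbeta]]; [exists f, q1, q2; auto|].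
  set (u := gmul (ginv q1) q2).
  pose proof (transfer_tword H G (fun h => conjg G (f h) q1) u K K' i t i' t' phi
    (proj1 HK') phi_hom phi_i phi_t l gone g) as Etr.
  rewrite E, (hom_one _ _ _ (proj1 HK')), gmul_one_r in Etr.
  revert Etr. apply (britton G (code_dom c) (code_cod c) (code_map c) sg1 sg2 hbeta K' i' t' HK').
  - subst c. apply (transfer_reduced H G _ u F1 F2 _ _ (fun h => In h L)); [| |exact Red|exact Hl].
    + intros h Hh. apply (code_dom_reflect L f q1 q2 finj h Hh).
    + intros h Hh. replace (gmul (gmul (ginv u) (conjg G (f h) q1)) u) with (conjg G (f h) q2)
        by (unfold u, conjg; gnorm; reflexivity).
      apply (code_cod_reflect L f q1 q2 finj h Hh).
  - destruct l as [|p l']; [right | left].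
    + simpl. rewrite gmul1. intro E1. destruct NT as [NT|NT]; [apply NT; reflexivity|]. apply NT.
      apply finj; [apply in_or_app; left; exact Hg | apply F1_in_dom, (subgroup_one _ _ sgF1) |].
      apply (conjg_inj G q1). rewrite E1, (hom_one _ _ _ hf). unfold conjg. gnorm. reflexivity.
    + intro E1. apply (f_equal (@length _)) in E1. rewrite transfer_length in E1. discriminate.
Qed.

End Realized.

Lemma code_HNN_fully_residually (SH : list H) : generates H SH -> (forall L, realizes L c) ->
  fully_residually K' K.
Proof.
  intros genH Hc SK.
  set (Q := map (fun p => gmul (ginv (fst p)) (snd p)) (list_prod SK SK)).
  destruct (HNN_reduced_forms H F1 F2 alpha K i t HK halpha SH genH Q) as [L HL].
  destruct (Hc L) as [f [q1 [q2 [hf [finj Ec]]]]].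
  destruct (code_HNN_hom L f q1 q2 hf finj Ec) as [phi [phom [phi_i phi_t]]].
  exists phi. split; [exact phom|]. intros x y Hx Hy E.
  destruct (HL (gmul (ginv x) y)) as [g [l [Red [Ev [Hg Hl]]]]].
  { apply (in_map (fun p => gmul (ginv (fst p)) (snd p)) _ (x, y)), in_prod; assumption. }
  destruct (classic (l = [] /\ g = gone)) as [[-> ->]|NT].
  - apply eq_of_ldiv_one. rewrite <- Ev. apply (hom_one _ _ _ (HNN_hom _ _ _ _ _ _ HK)).
  - exfalso.
    apply (code_HNN_hom_nontrivial L f q1 q2 hf finj Ec phi phom phi_i phi_t g l Red Hg Hl).
    + destruct l; [right; intro; apply NT; auto | left; discriminate].
    + rewrite Ev, phom, (hom_inv _ _ _ phom), E, gmulV. reflexivity.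
Qed.

End CodeHNN.

End Codes.

Theorem lemma4p1 :
  forall (G : Group), hyperbolic_group G ->
  forall (H : Group), limit_group G H ->
  forall (F1 F2 : H -> Prop) (alpha : H -> H),
    finite_subgroup H F1 -> finite_subgroup H F2 -> sub_iso H F1 F2 alpha ->
    exists (F1' F2' : G -> Prop) (beta : G -> G),
      finite_subgroup G F1' /\ finite_subgroup G F2' /\ sub_iso G F1' F2' beta /\
      forall (K : Group) (i : H -> K) (t : K), is_HNN H F1 alpha K i t ->
      forall (K' : Group) (i' : G -> K') (t' : K'), is_HNN G F1' beta K' i' t' ->
        limit_group K' K.
Proof.
  intros G [SG [genG [delta four_point]]] H [[SH genH] residual] F1 F2 alpha
    [sgF1 [l1 Hl1]] [sgF2 [l2 Hl2]] halpha.
  destruct (exact_list F1 l1 Hl1) as [lF1 HlF1].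
  destruct (exact_list F2 l2 Hl2) as [lF2 HlF2].
  destruct (stable_code G H F1 F2 alpha lF1 lF2 HlF1 HlF2 sgF1 sgF2 halpha
              SG genG delta four_point residual) as [c Hc].
  destruct (realized_code_sub_iso G H F1 F2 alpha lF1 lF2 HlF1 HlF2 sgF1 sgF2 halpha [] c (Hc []))
    as [fin1 [fin2 hbeta]].
  exists (code_dom G c), (code_cod G c), (code_map G c).
  split; [exact fin1 | split; [exact fin2 | split; [exact hbeta |]]].
  intros K i t HK K' i' t' HK'. split.
  - exists (map i SH ++ [t]). apply (HNN_generates H F1 alpha K i t HK SH genH).
  - apply (code_HNN_fully_residually G H F1 F2 alpha lF1 lF2 HlF1 HlF2 sgF1 sgF2 halpha
             K i t HK c K' i' t' HK' SH genH Hc).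
Qed.
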